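(* Let $V$ be a Hausdorff, sequentially complete locally convex space whose topology is induced by a family $\mathcal P$ of seminorms, let $\Omega\subset\mathbb R^m$ be open and $k\in(0,\infty)\setminus\mathbb N$. A function $f\colon\Omega\to V$ belongs to $C^k(\Omega,V)$ if and only if for each $p\in\mathcal P$ there is $C\in(0,\infty)$ such that for every continuous linear form $l\in V'$ one has $l\circ f\in C^k(\Omega,\mathbb R)$ and $|l\circ f|_k\le C\,p^*(l)$.
   Context: $V'$ denotes the space of continuous linear forms $V\to\mathbb R$; for $l\in V'$, $p\in\mathcal P$, $p^*(l)=\sup\{l(v)\colon v\in V,\ p(v)\le1\}\le\infty$. For $k\in(0,\infty)\setminus\mathbb N$ write $[k]$ for its integer part and $\{k\}=k-[k]$. A function $f\colon\Omega\to V$ is in $C^k(\Omega,V)$ if it is bounded, has partial derivatives of all orders $\le[k]$, and every such partial $g=\partial^\alpha f$, $|\alpha|\le[k]$, satisfies $\tilde p_{\{k\}}(g)=\sup\{p(g(s)-g(t))/|s-t|^{\{k\}}\colon s,t\in\Omega,\ s\ne t\}<\infty$ for all $p\in\mathcal P$. For $p\in\mathcal P$ put $p_k(f)=\max\{\sup_\Omega p(f),\ \tilde p_{\{k\}}(\partial^\alpha f)\colon|\alpha|\le[k]\}$; when $V=\mathbb R$, $p=|\cdot|$, this is written $|\cdot|_k$ (the usual Hölder norm). *)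

From mathcomp Require Import ssreflect ssrfun ssrbool eqtype ssrnat seq fintype.
From Stdlib Require Import Reals Lra.
Open Scope R_scope.

Record LCS := {
  car : Type;
  vadd : car -> car -> car;
  vzero : car;
  vopp : car -> car;
  vscal : R -> car -> car;
  vaddA : forall x y z, vadd x (vadd y z) = vadd (vadd x y) z;
  vaddC : forall x y, vadd x y = vadd y x;
  vadd0 : forall x, vadd x vzero = x;
  vaddN : forall x, vadd x (vopp x) = vzero;
  vscalA : forall a b x, vscal a (vscal b x) = vscal (a * b) x;
  vscal1 : forall x, vscal 1 x = x;
  vscalDr : forall a x y, vscal a (vadd x y) = vadd (vscal a x) (vscal a y);
  vscalDl : forall a b x, vscal (a + b) x = vadd (vscal a x) (vscal b x);
  Idx : Type;
  sn : Idx -> car -> R;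
  sn_triangle : forall i x y, sn i (vadd x y) <= sn i x + sn i y;
  sn_scal : forall i a x, sn i (vscal a x) = Rabs a * sn i x
}.

Definition vsub (V : LCS) (x y : car V) : car V := vadd V x (vopp V y).

Definition hausdorff (V : LCS) : Prop :=
  forall x : car V, (forall i, sn V i x = 0) -> x = vzero V.

Definition cauchy_seq (V : LCS) (u : nat -> car V) : Prop :=
  forall i eps, 0 < eps -> exists N : nat, forall n p : nat,
    (N <= n)%coq_nat -> (N <= p)%coq_nat -> sn V i (vsub V (u n) (u p)) < eps.

Definition converges_to (V : LCS) (u : nat -> car V) (x : car V) : Prop :=
  forall i eps, 0 < eps -> exists N : nat, forall n : nat,
    (N <= n)%coq_nat -> sn V i (vsub V (u n) x) < eps.

Definition seq_complete (V : LCS) : Prop :=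
  forall u, cauchy_seq V u -> exists x, converges_to V u x.

(* l : V -> R belongs to V' : linear and continuous for the topology
   induced by the seminorms (basic neighbourhoods are finite
   intersections of seminorm balls). *)
Definition cont_linear (V : LCS) (l : car V -> R) : Prop :=
  (forall x y, l (vadd V x y) = l x + l y) /\
  (forall a x, l (vscal V a x) = a * l x) /\
  (forall x eps, 0 < eps -> exists (F : list (Idx V)) (delta : R), 0 < delta /\
     forall y, (forall i, List.In i F -> sn V i (vsub V y x) < delta) ->
       Rabs (l y - l x) < eps).

(* [dual_bound V i l B] : B is an upper bound of {l(v) : p_i(v) <= 1}.
   Hence "X <= C * p^*(l)" (with p^*(l) in [0,oo]) is expressed as
   "forall B, dual_bound V i l B -> X <= C * B". *)
Definition dual_bound (V : LCS) (i : Idx V) (l : car V -> R) (B : R) : Prop :=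
  forall v, sn V i v <= 1 -> l v <= B.

Lemma R_sn_triangle : forall (i : unit) (x y : R), Rabs (x + y) <= Rabs x + Rabs y.
Proof. intros; apply Rabs_triang. Qed.
Lemma R_sn_scal : forall (i : unit) (a x : R), Rabs (a * x) = Rabs a * Rabs x.
Proof. intros; apply Rabs_mult. Qed.

Definition RLCS : LCS :=
  {| car := R; vadd := Rplus; vzero := 0; vopp := Ropp; vscal := Rmult;
     vaddA := fun x y z => Logic.eq_sym (Rplus_assoc x y z);
     vaddC := Rplus_comm;
     vadd0 := Rplus_0_r;
     vaddN := Rplus_opp_r;
     vscalA := fun a b x => Logic.eq_sym (Rmult_assoc a b x);
     vscal1 := Rmult_1_l;
     vscalDr := Rmult_plus_distr_l;
     vscalDl := Rmult_plus_distr_r;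
     Idx := unit;
     sn := fun _ x => Rabs x;
     sn_triangle := R_sn_triangle;
     sn_scal := R_sn_scal |}.

Definition Rm (m : nat) := 'I_m -> R.

Definition distRm (m : nat) (s t : Rm m) : R :=
  sqrt (foldr (fun i acc => (s i - t i) * (s i - t i) + acc) 0 (enum 'I_m)).

Definition is_open (m : nat) (Om : Rm m -> Prop) : Prop :=
  forall s, Om s -> exists r, 0 < r /\ forall t, distRm m t s < r -> Om t.

Definition shift (m : nat) (s : Rm m) (j : 'I_m) (h : R) : Rm m :=
  fun i => if i == j then s i + h else s i.

Definition is_partial (V : LCS) (m : nat) (Om : Rm m -> Prop)
    (g : Rm m -> car V) (j : 'I_m) (d : Rm m -> car V) : Prop :=
  forall s, Om s -> forall i eps, 0 < eps -> exists delta, 0 < delta /\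
    forall h, h <> 0 -> Rabs h < delta -> Om (shift m s j h) ->
      sn V i (vsub V (vscal V (/ h) (vsub V (g (shift m s j h)) (g s))) (d s))
        < eps.

(* D w is the iterated partial derivative of f along the word of directions
   w (the last-applied direction first); all iterated partials of order
   <= n exist on Om. *)
Definition deriv_family (V : LCS) (m : nat) (Om : Rm m -> Prop) (n : nat)
    (f : Rm m -> car V) (D : list 'I_m -> Rm m -> car V) : Prop :=
  (forall s, Om s -> D nil s = f s) /\
  (forall (w : list 'I_m) (j : 'I_m), (length w < n)%coq_nat ->
     is_partial V m Om (D w) j (D (j :: w))).

Definition ipart (k : R) : nat := Z.to_nat (Int_part k).
Definition fpart (k : R) : R := frac_part k.

Definition holder_le (V : LCS) (m : nat) (Om : Rm m -> Prop) (theta : R)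
    (g : Rm m -> car V) (i : Idx V) (M : R) : Prop :=
  forall s t, Om s -> Om t -> s <> t ->
    sn V i (vsub V (g s) (g t)) <= M * Rpower (distRm m s t) theta.

Definition in_Ck (V : LCS) (m : nat) (Om : Rm m -> Prop) (k : R)
    (f : Rm m -> car V) : Prop :=
  exists D, deriv_family V m Om (ipart k) f D /\
    (forall i, exists M, forall s, Om s -> sn V i (f s) <= M) /\
    (forall w, (length w <= ipart k)%coq_nat ->
       forall i, exists M, holder_le V m Om (fpart k) (D w) i M).

(* p_k(f) <= M  (derivatives are unique on the open set Om) *)
Definition Ck_seminorm_le (V : LCS) (m : nat) (Om : Rm m -> Prop) (k : R)
    (f : Rm m -> car V) (i : Idx V) (M : R) : Prop :=
  exists D, deriv_family V m Om (ipart k) f D /\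
    (forall s, Om s -> sn V i (f s) <= M) /\
    (forall w, (length w <= ipart k)%coq_nat ->
       holder_le V m Om (fpart k) (D w) i M).

(* If [f] is in [C^k], then [|l v| <= p^*(l) p(v)] transports the bounds on
   [f] and its partial derivatives to [l o f].  Conversely, Hahn-Banach gives
   [p(v) = sup {l v | p^*(l) <= 1}], so estimates on the [l o f] that are
   uniform over the dual unit ball of [p] are estimates for [p].  By the mean
   value theorem applied to [l o D^w f], the difference quotients [Q h] of
   [D^w f] in a direction [e_j] satisfy
   [p (Q h - Q h') <= C (|h| + |h'|)^{k}]; as [{k} > 0] they are Cauchy when
   [h -> 0], sequential completeness provides the partial derivative, and [l]
   maps it to the scalar one.  Induction on [|w| <= [k]] then yields all
   partial derivatives of [f], and their bounds follow by Hahn-Banach again. *)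

From mathcomp Require Import ssreflect ssrfun ssrbool eqtype ssrnat seq fintype.
From mathcomp Require Import boolp classical_sets.
From Stdlib Require Import ZArith Reals Lra Lia.
From Stdlib Require Import ClassicalEpsilon FunctionalExtensionality.
Open Scope R_scope.

Section VectorAlgebra.
Context {V : LCS}.
Local Notation "x +v y" := (vadd V x y) (at level 50, left associativity).
Local Notation "x -v y" := (vsub V x y) (at level 50, left associativity).
Local Notation "-v x" := (vopp V x) (at level 35).
Local Notation "a *v x" := (vscal V a x) (at level 40).
Local Notation "0v" := (vzero V).

Lemma vadd0l x : 0v +v x = x.
Proof. by rewrite vaddC vadd0. Qed.

Lemma vaddNl x : -v x +v x = 0v.
Proof. by rewrite vaddC vaddN. Qed.

Lemma vaddI x y z : x +v y = x +v z -> y = z.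
Proof.
move=> H; have : -v x +v (x +v y) = -v x +v (x +v z) by rewrite H.
by rewrite !vaddA vaddNl !vadd0l.
Qed.

Lemma vscal0 x : 0 *v x = 0v.
Proof. by apply: (vaddI (0 *v x)); rewrite vadd0 -vscalDl Rplus_0_r. Qed.

Lemma vscalN1 x : (-1) *v x = -v x.
Proof.
apply: (vaddI x); rewrite vaddN -{1}(vscal1 V x) -vscalDl.
by rewrite Rplus_opp_r vscal0.
Qed.

Lemma vsubE x y : x -v y = x +v (-1) *v y.
Proof. by rewrite vscalN1. Qed.

Lemma vscalv0 a : a *v 0v = 0v.
Proof. by rewrite -(vscal0 0v) vscalA Rmult_0_r. Qed.

Lemma vsubv x : x -v x = 0v.
Proof. exact: vaddN. Qed.

Lemma vsubv0 x : x -v 0v = x.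
Proof. by rewrite vsubE vscalv0 vadd0. Qed.

Lemma vsubK x y : x -v y +v y = x.
Proof. by rewrite /vsub -vaddA vaddNl vadd0. Qed.

Lemma vsub_eq0 x y : x -v y = 0v -> x = y.
Proof. by move=> H; rewrite -(vsubK x y) H vadd0l. Qed.

Lemma vsub_trans x y z : x -v y +v (y -v z) = x -v z.
Proof. by rewrite /vsub vaddA vsubK. Qed.

Lemma vscal_vsub a x y : a *v (x -v y) = a *v x -v a *v y.
Proof. by rewrite !vsubE vscalDr !vscalA Rmult_comm. Qed.

Lemma vsubN x y : -v (x -v y) = y -v x.
Proof. by apply: (vaddI (x -v y)); rewrite vaddN vsub_trans vsubv. Qed.

Lemma vadd_scal_eq x u u' t t' :
  u +v t *v x = u' +v t' *v x -> u -v u' = (t' - t) *v x.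
Proof.
move=> H; apply: (vaddI (u' +v t *v x)).
rewrite vaddC vaddA vsubK H -vaddA -vscalDl.
by congr (_ +v vscal V _ x); ring.
Qed.

Lemma sn0 i : sn V i 0v = 0.
Proof. by rewrite -(vscal0 0v) sn_scal Rabs_R0 Rmult_0_l. Qed.

Lemma snN i x : sn V i (-v x) = sn V i x.
Proof. by rewrite -vscalN1 sn_scal Rabs_Ropp Rabs_R1 Rmult_1_l. Qed.

Lemma sn_ge0 i x : 0 <= sn V i x.
Proof. by have := sn_triangle V i x (-v x); rewrite vaddN sn0 snN; lra. Qed.

Lemma sn_vsub_triangle i x y z :
  sn V i (x -v z) <= sn V i (x -v y) + sn V i (y -v z).
Proof. by rewrite -(vsub_trans x y z); apply: sn_triangle. Qed.

Lemma sn_vsubC i x y : sn V i (x -v y) = sn V i (y -v x).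
Proof. by rewrite -vsubN snN. Qed.

Section Linear.
Context {l : car V -> R}.
Hypothesis ladd : forall x y, l (x +v y) = l x + l y.
Hypothesis lscal : forall a x, l (a *v x) = a * l x.

Lemma linear0 : l 0v = 0.
Proof. by rewrite -(vscal0 0v) lscal Rmult_0_l. Qed.

Lemma linearB x y : l (x -v y) = l x - l y.
Proof. by rewrite vsubE ladd lscal; ring. Qed.

End Linear.

Lemma cont_linearB {l} : cont_linear V l -> forall x y, l (x -v y) = l x - l y.
Proof. by case=> ladd [lscal _]; apply: linearB. Qed.

End VectorAlgebra.

Section HahnBanach.
Variables (V : LCS) (i : Idx V).
Local Notation "x +v y" := (vadd V x y) (at level 50, left associativity).
Local Notation "x -v y" := (vsub V x y) (at level 50, left associativity).
Local Notation "a *v x" := (vscal V a x) (at level 40).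
Local Notation "0v" := (vzero V).
Local Notation p := (sn V i).
Local Open Scope classical_set_scope.

(* Partial linear functionals dominated by [p], represented by their graphs so
   that a chain of extensions is bounded by its union. *)
Record dominated_graph (A : set (car V * R)) : Prop := {
  graph0 : A (0v, 0);
  graphD : forall x a y b, A (x, a) -> A (y, b) -> A (x +v y, a + b);
  graphZ : forall t x a, A (x, a) -> A (t *v x, t * a);
  graph_fun : forall x a b, A (x, a) -> A (x, b) -> a = b;
  graph_le : forall x a, A (x, a) -> a <= p x }.
Arguments graph0 {A}.
Arguments graphD {A} _ {x a y b}.
Arguments graphZ {A} _ t {x a}.
Arguments graph_fun {A} _ {x a b}.
Arguments graph_le {A} _ {x a}.

Lemma graphB {A x a y b} :
  dominated_graph A -> A (x, a) -> A (y, b) -> A (x -v y, a - b).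
Proof.
move=> gA Ha Hb; rewrite vsubE (_ : a - b = a + -1 * b); last ring.
by apply: (graphD gA Ha); apply: (graphZ gA).
Qed.

Definition line_graph v : set (car V * R) := [set (a *v v, a * p v) | a in setT].

Lemma dominated_line_graph v : dominated_graph (line_graph v).
Proof.
split.
- by exists 0 => //; rewrite vscal0 Rmult_0_l.
- move=> x a y b [s _ [<- <-]] [t _ [<- <-]].
  by exists (s + t) => //; rewrite vscalDl Rmult_plus_distr_r.
- move=> t x a [s _ [<- <-]].
  by exists (t * s) => //; rewrite vscalA Rmult_assoc.
- move=> x a b [s _ [<- <-]] [t _ [Est <-]].
  have [-> //|Hst] := Req_dec s t.
  have : p ((s - t) *v v) = 0.
    by rewrite -(vadd_scal_eq v 0v 0v t s) ?vsubv ?sn0 // !vadd0l.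
  rewrite sn_scal => /Rmult_integral [|->]; last ring.
  by move/Rabs_no_R0; lra.
- move=> x a [s _ [<- <-]].
  by rewrite sn_scal; apply/Rmult_le_compat_r/RRle_abs/sn_ge0.
Qed.

Lemma dominated_graph_bigcup (F : set (set (car V * R))) :
  F !=set0 -> F `<=` dominated_graph -> total_on F subset ->
  dominated_graph (\bigcup_(A in F) A).
Proof.
move=> [A0 FA0] gF Ftot.
have common z w : (\bigcup_(A in F) A) z -> (\bigcup_(A in F) A) w ->
    exists2 A, F A & A z /\ A w.
  move=> [A FA Az] [B FB Bw]; have [AB|BA] := Ftot _ _ FA FB.
  - by exists B => //; split => //; apply: AB.
  - by exists A => //; split => //; apply: BA.
split.
- by exists A0 => //; apply: graph0; apply: gF.
- move=> x a y b Ha Hb; have [A FA [Ax Ay]] := common _ _ Ha Hb.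
  by exists A => //; apply: (graphD (gF _ FA)).
- by move=> t x a [A FA Ax]; exists A => //; apply: (graphZ (gF _ FA)).
- move=> x a b Ha Hb; have [A FA [Ax Ay]] := common _ _ Ha Hb.
  exact: (graph_fun (gF _ FA)) Ax Ay.
- by move=> x a [A FA Ax]; apply: (graph_le (gF _ FA)).
Qed.

(* [c] lies between [sup (a - p (u - x0))] and [inf (p (u + x0) - a)] over the
   graph. *)
Lemma extension_constant {A} x0 : dominated_graph A ->
  exists c, forall u a t, A (u, a) -> a + t * c <= p (u +v t *v x0).
Proof.
move=> gA.
have sep u a u' a' : A (u, a) -> A (u', a') ->
    a - p (u -v x0) <= p (u' +v x0) - a'.
  move=> Ha Ha'; have := graph_le gA (graphD gA Ha Ha').
  have -> : u +v u' = u -v x0 +v (u' +v x0).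
    by rewrite (vaddC V u') vaddA vsubK.
  by have := sn_triangle V i (u -v x0) (u' +v x0); lra.
pose E r := exists u a, A (u, a) /\ r = a - p (u -v x0).
have [c [cub clb]] : {c | is_lub E c}.
  apply: completeness.
  - exists (p (0v +v x0) - 0) => _ [u [a [Ha ->]]].
    exact: sep _ _ _ _ Ha (graph0 gA).
  - by exists (0 - p (0v -v x0)), 0v, 0; split => //; apply: graph0.
exists c => u a t Ha.
have [t0|[->|t0]] := Rtotal_order t 0.
- have : / - t * a - p (/ - t *v u -v x0) <= c.
    apply: cub; exists (/ - t *v u), (/ - t * a); split => //.
    exact: (graphZ gA _ Ha).
  have -> : u +v t *v x0 = - t *v (/ - t *v u -v x0).
    rewrite vscal_vsub vscalA Rinv_r; last lra.
    by rewrite vscal1 !vsubE vscalA; congr (_ +v vscal V _ x0); ring.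
  rewrite sn_scal Rabs_pos_eq; last lra.
  move/(Rmult_le_compat_l (- t)) => /(_ ltac:(lra)).
  by rewrite Rmult_minus_distr_l -Rmult_assoc Rinv_r; lra.
- by rewrite vscal0 vadd0 Rmult_0_l Rplus_0_r; exact: (graph_le gA Ha).
- have : c <= p (/ t *v u +v x0) - / t * a.
    apply: clb => _ [u' [a' [Ha' ->]]].
    exact: sep _ _ _ _ Ha' (graphZ gA (/ t) Ha).
  have -> : u +v t *v x0 = t *v (/ t *v u +v x0).
    by rewrite vscalDr vscalA Rinv_r ?vscal1 //; lra.
  rewrite sn_scal Rabs_pos_eq; last lra.
  move/(Rmult_le_compat_l t) => /(_ ltac:(lra)).
  by rewrite Rmult_minus_distr_l -Rmult_assoc Rinv_r; lra.
Qed.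

Definition graph_ext A x0 c : set (car V * R) :=
  fun z => exists u a t, A (u, a) /\ z = (u +v t *v x0, a + t * c).

Lemma graph_ext_sub {A} x0 c : A `<=` graph_ext A x0 c.
Proof.
move=> [u a] Ha; exists u, a, 0; split => //.
by rewrite vscal0 vadd0 Rmult_0_l Rplus_0_r.
Qed.

Lemma graph_ext_x0 {A} x0 c : dominated_graph A -> graph_ext A x0 c (x0, c).
Proof.
move=> gA; exists 0v, 0, 1; split; first exact: (graph0 gA).
by rewrite vscal1 vadd0l Rmult_1_l Rplus_0_l.
Qed.

Lemma dominated_graph_ext {A x0 c} :
  dominated_graph A -> (forall a, ~ A (x0, a)) ->
  (forall u a t, A (u, a) -> a + t * c <= p (u +v t *v x0)) ->
  dominated_graph (graph_ext A x0 c).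
Proof.
move=> gA Ax0 Hc; split.
- exact/graph_ext_sub/graph0.
- move=> x a y b [u [a1 [t [Ha [-> ->]]]]] [u' [a1' [t' [Ha' [-> ->]]]]].
  exists (u +v u'), (a1 + a1'), (t + t'); split; first exact: (graphD gA Ha Ha').
  congr pair; last ring.
  rewrite vscalDl -!vaddA; congr vadd.
  by rewrite !vaddA (vaddC V _ u').
- move=> s x a [u [a1 [t [Ha [-> ->]]]]].
  exists (s *v u), (s * a1), (s * t); split; first exact: (graphZ gA s Ha).
  by congr pair; [rewrite vscalDr vscalA | ring].
- move=> x a b [u [a1 [t [Ha [Ex ->]]]]] [u' [a1' [t' [Ha' [Ex' ->]]]]].
  have Euu := vadd_scal_eq x0 u u' t t' (etrans (esym Ex) Ex').
  have [Ett|Htt] := Req_dec t t'.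
  + subst t'; rewrite Rminus_diag vscal0 in Euu.
    by move/vsub_eq0: Euu Ha => -> Ha; rewrite (graph_fun gA Ha Ha').
  + exfalso; apply: (Ax0 (/ (t' - t) * (a1 - a1'))).
    have := graphZ gA (/ (t' - t)) (graphB gA Ha Ha').
    by rewrite Euu vscalA Rinv_l ?vscal1 //; lra.
- by move=> x a [u [a1 [t [Ha [-> ->]]]]]; apply: Hc.
Qed.

Lemma hahn_banach_graph v :
  exists A, [/\ dominated_graph A, A (v, p v) & forall x, exists a, A (x, a)].
Proof.
pose T := {A : set (car V * R) | dominated_graph A /\ A (v, p v)}.
have line_v : line_graph v (v, p v) by exists 1; rewrite ?vscal1 ?Rmult_1_l.
have line_sub (X : T) : line_graph v `<=` sval X.
  by case: X => X [gX Xv] _ [a _ <-] /=; apply: (graphZ gX).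
pose leT (X Y : T) := `[< sval X `<=` sval Y >].
have [[A [gA Av]] Amax] : exists X : T, premaximal leT X.
  apply: (ZL_preorder
    (exist _ (line_graph v) (conj (dominated_line_graph v) line_v))).
  - by move=> X; apply/asboolP.
  - by move=> X Y Z /asboolP XY /asboolP YZ; apply/asboolP => z /XY /YZ.
  move=> F Ftot; pose G B := B = line_graph v \/ exists2 X, F X & B = sval X.
  have gU : dominated_graph (\bigcup_(B in G) B).
    apply: dominated_graph_bigcup; first by exists (line_graph v); left.
      by move=> B [->|[X _ ->]]; [apply: dominated_line_graph | case: (svalP X)].
    move=> B C [->|[X FX ->]] [->|[Y FY ->]].
    - by left.
    - by left; exact: (line_sub Y).
    - by right; exact: (line_sub X).
    - by have [/asboolP|/asboolP] := Ftot _ _ FX FY; [left | right].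
  have Uv : (\bigcup_(B in G) B) (v, p v) by exists (line_graph v); first left.
  exists (exist _ (\bigcup_(B in G) B) (conj gU Uv)) => X FX.
  by apply/asboolP => z Xz; exists (sval X) => //; right; exists X.
exists A; split => // x0.
case: (pselect (exists a, A (x0, a))) => // Hx0.
have {}Hx0 a : ~ A (x0, a) by move=> Ha; apply: Hx0; exists a.
have [c Hc] := extension_constant x0 gA.
have gA' := dominated_graph_ext gA Hx0 Hc.
have A'v := graph_ext_sub x0 c _ Av.
have /asboolP A'A := Amax (exist _ (graph_ext A x0 c) (conj gA' A'v))
  (asboolT (graph_ext_sub x0 c)).
by exists c; apply: A'A; apply: graph_ext_x0.
Qed.

Lemma hahn_banach v :
  exists l, [/\ cont_linear V l, dual_bound V i l 1 & l v = p v].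
Proof.
have [A [gA Av Atot]] := hahn_banach_graph v.
have [l Al] := boolp.choice Atot.
have lE x a : A (x, a) -> l x = a by move/(graph_fun gA (Al x)).
have ladd x y : l (x +v y) = l x + l y by apply/lE/(graphD gA).
have lscal a x : l (a *v x) = a * l x by apply/lE/(graphZ gA).
have lle x : l x <= p x := graph_le gA (Al x).
exists l; split; last exact: lE.
- split => //; split => // x eps eps_gt0.
  exists [:: i], eps; split => // y /(_ i (or_introl erefl)) Hy.
  rewrite -(linearB ladd lscal); apply: Rabs_def1.
    exact: Rle_lt_trans (lle _) Hy.
  by have := lle (x -v y); rewrite !(linearB ladd lscal) sn_vsubC; lra.
- by move=> u /(Rle_trans _ _ _ (lle u)).
Qed.

Lemma sn_le_dual u K :
  (forall l, cont_linear V l -> dual_bound V i l 1 -> l u <= K) -> p u <= K.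
Proof. by move=> H; have [l [Hl Hb <-]] := hahn_banach u; apply: H. Qed.

End HahnBanach.

Lemma RLCS_sn i x : sn RLCS i x = Rabs x.
Proof. by []. Qed.

Lemma RLCS_vsub x y : vsub RLCS x y = x - y.
Proof. by []. Qed.

Lemma RLCS_vscal a x : vscal RLCS a x = a * x.
Proof. by []. Qed.

Section ContinuousLinear.
Context {V : LCS}.
Local Notation "x -v y" := (vsub V x y) (at level 50, left associativity).
Local Notation "a *v x" := (vscal V a x) (at level 40).
Local Notation "0v" := (vzero V).

Definition sn_sum (F : list (Idx V)) (v : car V) : R :=
  List.fold_right (fun i acc => sn V i v + acc) 0 F.

Lemma sn_sum_ge0 F v : 0 <= sn_sum F v.
Proof. by elim: F => [|i F IH] /=; [lra | have := sn_ge0 i v; lra]. Qed.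

Lemma sn_le_sn_sum F i v : List.In i F -> sn V i v <= sn_sum F v.
Proof.
elim: F => [//|j F IH] /= [->|Hi]; first by have := sn_sum_ge0 F v; lra.
by have := IH Hi; have := sn_ge0 j v; lra.
Qed.

(* [|l| < 1] on the [F]-ball of radius [d] around [0]; rescaling gives the
   constant [2 / d]. *)
Lemma cont_linear_bound {l} : cont_linear V l ->
  exists F c, 0 <= c /\ forall v, Rabs (l v) <= c * sn_sum F v.
Proof.
move=> [ladd [lscal lcont]].
have [F [d [d_gt0 HF]]] := lcont 0v 1 Rlt_0_1.
have cd : 2 / d * d = 2 by field; lra.
set c := 2 / d in cd *.
have c_gt0 : 0 < c by nra.
exists F, c; split => [|v]; first lra.
apply: Rle_plus_epsilon => eps eps_gt0.
have S_ge0 := sn_sum_ge0 F v; set S := sn_sum F v in S_ge0 *.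
have Sq_gt0 : 0 < c * S + eps by nra.
set q := / (c * S + eps).
have q_gt0 : 0 < q by apply: Rinv_0_lt_compat.
have qE : q * (c * S + eps) = 1 by apply: Rinv_l; lra.
have qS : q * S < d.
  have : q * S * c * d < 1 * d by apply: Rmult_lt_compat_r => //; nra.
  by rewrite Rmult_assoc cd; nra.
have Hq i : List.In i F -> sn V i (q *v v -v 0v) < d.
  move=> Hi; rewrite vsubv0 sn_scal Rabs_pos_eq; last lra.
  by have := sn_le_sn_sum F i v Hi; rewrite -/S; nra.
have := HF _ Hq; rewrite (linear0 lscal) Rminus_0_r lscal Rabs_mult.
by rewrite Rabs_pos_eq; nra.
Qed.

Lemma dual_bound_le {l i B} : cont_linear V l -> dual_bound V i l B ->
  0 <= B /\ forall v, Rabs (l v) <= B * sn V i v.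
Proof.
move=> [ladd [lscal _]] Hb.
have B_ge0 : 0 <= B by rewrite -(linear0 lscal); apply: Hb; rewrite sn0; lra.
split => // v; apply: Rle_plus_epsilon => eps eps_gt0.
have P_ge0 := sn_ge0 i v; set P := sn V i v in P_ge0 *.
have e_gt0 : 0 < eps / (B + 1) by apply: Rdiv_lt_0_compat; lra.
have eB : eps / (B + 1) * (B + 1) = eps by field; lra.
set e := eps / (B + 1) in e_gt0 eB *.
set q := / (P + e).
have q_gt0 : 0 < q by apply: Rinv_0_lt_compat; lra.
have qE : q * (P + e) = 1 by apply: Rinv_l; lra.
have Hv a : Rabs a = q -> a * l v <= B.
  by move=> Ha; rewrite -lscal; apply: Hb; rewrite sn_scal Ha -/P; nra.
have H1 := Hv q (Rabs_pos_eq _ (Rlt_le _ _ q_gt0)).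
have H2 := Hv (- q) ltac:(rewrite Rabs_Ropp Rabs_pos_eq; lra).
apply: Rabs_le; nra.
Qed.

End ContinuousLinear.

Definition lim_at0 (V : LCS) (Q : R -> Prop) (G : R -> car V) (d : car V) :=
  forall i eps, 0 < eps -> exists delta, 0 < delta /\
    forall h, Q h -> Rabs h < delta -> sn V i (vsub V (G h) d) < eps.

Section LimitsAt0.
Context {V : LCS}.
Local Notation "x -v y" := (vsub V x y) (at level 50, left associativity).

Lemma lim_at0_sub {Q Q' : R -> Prop} {G d} :
  lim_at0 V Q G d -> (forall h, Q' h -> Q h) -> lim_at0 V Q' G d.
Proof.
move=> HG QQ' i eps /(HG i) [del [del_gt0 Hdel]].
by exists del; split => // h /QQ'; apply: Hdel.
Qed.

Lemma lim_at0_eq {Q G G' d} :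
  lim_at0 V Q G d -> (forall h, Q h -> G h = G' h) -> lim_at0 V Q G' d.
Proof.
move=> HG GG' i eps /(HG i) [del [del_gt0 Hdel]].
by exists del; split => // h Qh; rewrite -GG' //; apply: Hdel.
Qed.

Lemma lim_at0_sn_sum {Q G d} F : lim_at0 V Q G d ->
  forall eps, 0 < eps -> exists delta, 0 < delta /\
    forall h, Q h -> Rabs h < delta -> sn_sum F (G h -v d) < eps.
Proof.
move=> HG; elim: F => [|i F IH] eps eps_gt0 /=.
  by exists 1; split => //; lra.
have [d1 [d1_gt0 H1]] := HG i (eps / 2) ltac:(lra).
have [d2 [d2_gt0 H2]] := IH (eps / 2) ltac:(lra).
exists (Rmin d1 d2); split => [|h Qh Hh]; first exact: Rmin_pos.
have := H1 h Qh (Rlt_le_trans _ _ _ Hh (Rmin_l _ _)).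
have := H2 h Qh (Rlt_le_trans _ _ _ Hh (Rmin_r _ _)); lra.
Qed.

Lemma cont_linear_lim {l Q G d} : cont_linear V l ->
  lim_at0 V Q G d -> lim_at0 RLCS Q (fun h => l (G h)) (l d).
Proof.
move=> Hl HG [] eps eps_gt0.
have [F [c [c_ge0 Hc]]] := cont_linear_bound Hl.
have e_gt0 : 0 < eps / (c + 1) by apply: Rdiv_lt_0_compat; lra.
have ec : eps / (c + 1) * (c + 1) = eps by field; lra.
have [del [del_gt0 Hdel]] := lim_at0_sn_sum F HG _ e_gt0.
exists del; split => // h Qh Hh; rewrite RLCS_sn RLCS_vsub -(cont_linearB Hl).
apply: Rle_lt_trans (Hc _) _.
have := Hdel h Qh Hh; have := sn_sum_ge0 F (G h -v d); nra.
Qed.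

End LimitsAt0.

Lemma lim_at0_R_unique {Q G a b} :
  (forall delta, 0 < delta -> exists h, Q h /\ Rabs h < delta) ->
  lim_at0 RLCS Q G a -> lim_at0 RLCS Q G b -> a = b.
Proof.
move=> Q0 Ha Hb; case: (Req_dec a b) => // ab.
have ab_gt0 := Rabs_pos_lt _ (Rminus_eq_contra _ _ ab).
have [d1 [d1_gt0 H1]] := Ha tt (Rabs (a - b) / 2) ltac:(lra).
have [d2 [d2_gt0 H2]] := Hb tt (Rabs (a - b) / 2) ltac:(lra).
have [h [Qh Hh]] := Q0 _ (Rmin_pos _ _ d1_gt0 d2_gt0).
have := H1 h Qh (Rlt_le_trans _ _ _ Hh (Rmin_l _ _)).
have := H2 h Qh (Rlt_le_trans _ _ _ Hh (Rmin_r _ _)).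
rewrite !RLCS_sn !RLCS_vsub (Rabs_minus_sym (G h) a).
have := Rabs_triang (G h - b) (a - G h).
have -> : G h - b + (a - G h) = a - b by ring.
lra.
Qed.

Lemma inv_succ_small {delta} : 0 < delta ->
  exists N, forall n, (N <= n)%coq_nat -> / (INR n + 1) < delta.
Proof.
move=> del_gt0; have [N HN] := INR_unbounded (/ delta).
exists N => n /le_INR Hn; have idel_gt0 := Rinv_0_lt_compat _ del_gt0.
by rewrite -(Rinv_inv delta); apply: Rinv_lt_contravar; nra.
Qed.

Lemma Rpower_gt0 x t : 0 < Rpower x t.
Proof. exact: exp_pos. Qed.

Lemma Rpower_small {t eps} : 0 < t -> 0 < eps ->
  exists delta, 0 < delta /\ forall x, 0 < x -> x < delta -> Rpower x t < eps.
Proof.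
move=> t_gt0 eps_gt0; exists (Rpower eps (/ t)); split => [|x x_gt0 Hx].
  exact: Rpower_gt0.
have := Rlt_Rpower_l x (Rpower eps (/ t)) t t_gt0 (conj x_gt0 Hx).
by rewrite Rpower_mult Rinv_l ?Rpower_1 //; lra.
Qed.

Section CauchyAt0.
Context {V : LCS}.
Local Notation "x -v y" := (vsub V x y) (at level 50, left associativity).

Definition cauchy_at0 (G : R -> car V) :=
  forall i eps, 0 < eps -> exists delta, 0 < delta /\
    forall h h', h <> 0 -> h' <> 0 -> Rabs h < delta -> Rabs h' < delta ->
      sn V i (G h -v G h') < eps.

Lemma cauchy_at0_lim {G} : seq_complete V -> cauchy_at0 G ->
  exists d, lim_at0 V (fun h => h <> 0) G d.
Proof.
move=> Vcompl HG; pose u n := G (/ (INR n + 1)).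
have u_gt0 n : 0 < / (INR n + 1).
  by apply: Rinv_0_lt_compat; have := pos_INR n; lra.
have u_ne0 n : / (INR n + 1) <> 0 by have := u_gt0 n; lra.
have u_abs n : Rabs (/ (INR n + 1)) = / (INR n + 1).
  exact/Rabs_pos_eq/Rlt_le.
have [d Hd] : exists d, converges_to V u d.
  apply: Vcompl => i eps /(HG i) [del [del_gt0 Hdel]].
  have [N HN] := inv_succ_small del_gt0.
  by exists N => n n' Hn Hn'; apply: Hdel; rewrite ?u_abs; auto.
exists d => i eps eps_gt0.
have [del [del_gt0 Hdel]] := HG i (eps / 2) ltac:(lra).
have [N1 HN1] := Hd i (eps / 2) ltac:(lra).
have [N2 HN2] := inv_succ_small del_gt0.
pose n := Nat.max N1 N2.
exists del; split => // h h_ne0 Hh.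
apply: Rle_lt_trans (sn_vsub_triangle i _ (u n) _) _.
have := Hdel h _ h_ne0 (u_ne0 n) Hh.
rewrite u_abs => /(_ (HN2 n (Nat.le_max_r _ _))).
by have := HN1 n (Nat.le_max_l _ _); rewrite /u; lra.
Qed.

Lemma holder_cauchy_at0 {G r theta} : 0 < theta -> 0 < r ->
  (forall i, exists C, 0 < C /\ forall h h', h <> 0 -> h' <> 0 ->
     Rabs h < r -> Rabs h' < r ->
     sn V i (G h -v G h') <= C * Rpower (Rabs h + Rabs h') theta) ->
  cauchy_at0 G.
Proof.
move=> th_gt0 r_gt0 HG i eps eps_gt0.
have [C [C_gt0 HC]] := HG i.
have eC : C * (eps / C) = eps by field; lra.
have [d [d_gt0 Hd]] := Rpower_small th_gt0 (Rdiv_lt_0_compat _ _ eps_gt0 C_gt0).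
exists (Rmin r (d / 2)); split => [|h h' h0 h0' Hh Hh'].
  by apply: Rmin_pos; lra.
have := Rmin_l r (d / 2); have := Rmin_r r (d / 2) => m2 m1.
apply: Rle_lt_trans (HC h h' h0 h0' _ _) _; try lra.
have := Rabs_pos_lt _ h0; have := Rabs_pos_lt _ h0' => a0' a0.
have := Hd (Rabs h + Rabs h') ltac:(lra) ltac:(lra).
by move/(Rmult_lt_compat_l C) => /(_ C_gt0); rewrite eC.
Qed.

End CauchyAt0.

Definition shift_dom m (Om : Rm m -> Prop) s j (h : R) : Prop :=
  h <> 0 /\ Om (shift m s j h).

Section Shift.
Context {m : nat}.

Lemma shift_shift s j a b : shift m (shift m s j a) j b = shift m s j (a + b).
Proof.
by apply: functional_extensionality => i; rewrite /shift; case: eqP => // _; ring.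
Qed.

Lemma shift0 s j : shift m s j 0 = s.
Proof.
by apply: functional_extensionality => i; rewrite /shift; case: eqP => // _; ring.
Qed.

Lemma dist_shift s j a b :
  distRm m (shift m s j a) (shift m s j b) = Rabs (a - b).
Proof.
have sq (l : seq 'I_m) : uniq l ->
    foldr (fun i acc => (shift m s j a i - shift m s j b i) *
                        (shift m s j a i - shift m s j b i) + acc) 0 l
    = if j \in l then Rsqr (a - b) else 0.
  elim: l => [//|x l IH] /= /andP [xl ul]; rewrite IH // in_cons /shift.
  by case: (eqVneq x j) xl => [-> /negbTE -> | _ _] /=; rewrite /Rsqr; ring.
by rewrite /distRm sq ?enum_uniq // mem_enum sqrt_Rsqr_abs.
Qed.

Lemma dist_shift0 s j h : distRm m (shift m s j h) s = Rabs h.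
Proof. by rewrite -{2}(shift0 s j) dist_shift Rminus_0_r. Qed.

Lemma shift_inj {s j a b} : shift m s j a = shift m s j b -> a = b.
Proof. by move/(congr1 (fun t => t j)); rewrite /shift eqxx; lra. Qed.

Lemma open_shift_near0 {Om s} j : is_open m Om -> Om s ->
  forall delta, 0 < delta -> exists h, shift_dom m Om s j h /\ Rabs h < delta.
Proof.
move=> Oopen Os delta del_gt0; have [r [r_gt0 Hr]] := Oopen s Os.
have h_gt0 : 0 < Rmin delta r / 2 by have := Rmin_pos _ _ del_gt0 r_gt0; lra.
have habs : Rabs (Rmin delta r / 2) < Rmin delta r by rewrite Rabs_pos_eq; lra.
exists (Rmin delta r / 2); split; last by have := Rmin_l delta r; lra.
split; first lra.
by apply: Hr; rewrite dist_shift0; have := Rmin_r delta r; lra.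
Qed.

End Shift.

Definition diff_quot (V : LCS) m (g : Rm m -> car V) s j h : car V :=
  vscal V (/ h) (vsub V (g (shift m s j h)) (g s)).

Lemma is_partialP {V m Om g j d} :
  is_partial V m Om g j d <-> forall s, Om s ->
    lim_at0 V (shift_dom m Om s j) (diff_quot V m g s j) (d s).
Proof.
split=> Hg s Os i eps /(Hg s Os i) [del [del_gt0 Hdel]]; exists del; split => //.
- by move=> h [h0 Oh] Hh; apply: Hdel.
- by move=> h h0 Hh Oh; apply: Hdel.
Qed.

Lemma linear_diff_quot V m l g s j h : cont_linear V l ->
  l (diff_quot V m g s j h) = diff_quot RLCS m (fun s => l (g s)) s j h.
Proof.
by case=> ladd [lscal _]; rewrite /diff_quot lscal (linearB ladd lscal).
Qed.

Lemma deriv_family_comp V m Om n f D l : cont_linear V l ->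
  deriv_family V m Om n f D ->
  deriv_family RLCS m Om n (fun s => l (f s)) (fun w s => l (D w s)).
Proof.
move=> Hl [D0 DS]; split => [s Os|w j Hw]; first by rewrite D0.
apply/is_partialP => s Os.
have /is_partialP /(_ s Os) /(cont_linear_lim Hl) Hlim := DS w j Hw.
by apply: lim_at0_eq Hlim _ => h _; apply: linear_diff_quot.
Qed.

Lemma mvt_at0 {phi phi' : R -> R} {h} : h <> 0 ->
  (forall c, Rabs c <= Rabs h -> derivable_pt_lim phi c (phi' c)) ->
  exists c, Rabs c <= Rabs h /\ phi h - phi 0 = phi' c * h.
Proof.
move=> h0 Hd; have [h_gt0|h_lt0] : 0 < h \/ h < 0 by lra.
- have [c [Ec Hc]] := MVT_cor2 phi phi' 0 h h_gt0
    (fun c Hc => Hd c ltac:(rewrite !Rabs_pos_eq; lra)).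
  by exists c; split; [rewrite !Rabs_pos_eq; lra | rewrite Ec; ring].
- have [c [Ec Hc]] := MVT_cor2 phi phi' h 0 h_lt0
    (fun c Hc => Hd c ltac:(rewrite !Rabs_left1; lra)).
  by exists c; split; [rewrite !Rabs_left1; lra | lra].
Qed.

Section ScalarDifferenceQuotients.
Context {m : nat} {Om : Rm m -> Prop} {n : nat} {F : Rm m -> R}.
Context {E : list 'I_m -> Rm m -> R}.
Hypothesis HE : deriv_family RLCS m Om n F E.
Context {w : list 'I_m} {j : 'I_m} {s : Rm m} {r : R}.
Hypothesis Hw : (length w < n)%coq_nat.
Hypothesis ball : forall t, distRm m t s < r -> Om t.

Lemma diff_quot_mvt {h} : h <> 0 -> Rabs h < r -> exists xi, Rabs xi <= Rabs h /\
  diff_quot RLCS m (E w) s j h = E (j :: w) (shift m s j xi).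
Proof.
move=> h0 hr; pose phi t := E w (shift m s j t).
have Hd c : Rabs c < r -> derivable_pt_lim phi c (E (j :: w) (shift m s j c)).
  move=> cr eps eps_gt0.
  have Oc : Om (shift m s j c) by apply: ball; rewrite dist_shift0.
  have [del [del_gt0 Hdel]] := (proj2 HE) w j Hw _ Oc tt eps eps_gt0.
  have pos : 0 < Rmin del (r - Rabs c) by apply: Rmin_pos; lra.
  exists (mkposreal _ pos) => h' h'0 /= h'r.
  have := Hdel h' h'0 (Rlt_le_trans _ _ _ h'r (Rmin_l _ _)).
  rewrite RLCS_sn RLCS_vsub RLCS_vscal RLCS_vsub shift_shift.
  rewrite /phi /Rdiv Rmult_comm.
  apply; apply: ball; rewrite dist_shift0.
  by have := Rmin_r del (r - Rabs c); have := Rabs_triang c h'; lra.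
have [xi [xih Exi]] := mvt_at0 (phi := phi)
  (phi' := fun t => E (j :: w) (shift m s j t)) h0 (fun c ch => Hd c ltac:(lra)).
exists xi; split => //.
rewrite /diff_quot RLCS_vscal RLCS_vsub -{2}(shift0 s j) -/(phi h) -/(phi 0) Exi.
by rewrite Rmult_comm Rmult_assoc Rinv_r // Rmult_1_r.
Qed.

Context {theta M : R}.
Hypotheses (th_ge0 : 0 <= theta) (M_ge0 : 0 <= M).
Hypothesis HM : holder_le RLCS m Om theta (E (j :: w)) tt M.

Lemma diff_quot_holder {h h'} : h <> 0 -> h' <> 0 -> Rabs h < r -> Rabs h' < r ->
  Rabs (diff_quot RLCS m (E w) s j h - diff_quot RLCS m (E w) s j h')
    <= M * Rpower (Rabs h + Rabs h') theta.
Proof.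
move=> h0 h0' hr hr'.
have [xi [xih ->]] := diff_quot_mvt h0 hr.
have [xi' [xih' ->]] := diff_quot_mvt h0' hr'.
have Rp := Rpower_gt0 (Rabs h + Rabs h') theta.
have [<-|xx'] := Req_dec xi xi'; first by rewrite Rminus_diag Rabs_R0; nra.
have O t : Rabs t < r -> Om (shift m s j t).
  by move=> tr; apply: ball; rewrite dist_shift0.
have := HM _ _ (O xi ltac:(lra)) (O xi' ltac:(lra)) (fun e => xx' (shift_inj e)).
rewrite RLCS_sn RLCS_vsub dist_shift => Hhol.
apply: Rle_trans Hhol _; apply: Rmult_le_compat_l => //.
apply: Rle_Rpower_l => //; split; first exact/Rabs_pos_lt/Rminus_eq_contra.
by apply: Rle_trans (Rabs_triang xi (- xi')) _; rewrite Rabs_Ropp; lra.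
Qed.

End ScalarDifferenceQuotients.

Definition weak_Ck (V : LCS) (m : nat) (Om : Rm m -> Prop) (k : R)
    (f : Rm m -> car V) : Prop :=
  forall p : Idx V, exists C : R, 0 < C /\
    forall l : car V -> R, cont_linear V l ->
      in_Ck RLCS m Om k (fun s => l (f s)) /\
      (forall B : R, dual_bound V p l B ->
         Ck_seminorm_le RLCS m Om k (fun s => l (f s)) tt (C * B)).

Lemma fpart_pos {k} : 0 < k -> (forall n : nat, k <> INR n) -> 0 < fpart k.
Proof.
move=> k_gt0 kN; have fp_ge0 : 0 <= fpart k.
  by rewrite /fpart; have [] := base_fp k; lra.
case: (Rle_lt_or_eq_dec _ _ fp_ge0) => // /esym /fp_nat [z kz].
case: (kN (Z.to_nat z)).
rewrite INR_IZR_INZ Z2Nat.id -?kz //.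
by apply/Z.lt_le_incl/lt_0_IZR; rewrite -kz.
Qed.

Lemma fin_max {T : finType} (P : T -> R -> Prop) :
  (forall x M M', P x M -> M <= M' -> P x M') ->
  (forall x, exists M, P x M) -> exists M, forall x, P x M.
Proof.
move=> Pmono Pex.
have [M HM] : exists M, forall x, x \in enum T -> P x M.
  elim: (enum T) => [|x s [M HM]]; first by exists 0.
  have [Mx HMx] := Pex x.
  exists (Rmax M Mx) => y; rewrite in_cons => /orP [/eqP ->|ys].
  - exact: Pmono HMx (Rmax_r _ _).
  - exact: Pmono (HM _ ys) (Rmax_l _ _).
by exists M => x; apply: HM; rewrite mem_enum.
Qed.

Lemma words_bound {m n} (Q : list 'I_m -> R -> Prop) :
  (forall w M M', Q w M -> M <= M' -> Q w M') ->
  (forall w, (length w <= n)%coq_nat -> exists M, Q w M) ->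
  exists M, forall w, (length w <= n)%coq_nat -> Q w M.
Proof.
elim: n Q => [|n IH] Q Qmono Qex.
  have [M HM] := Qex nil (le_n 0).
  by exists M => -[|j w] //= /Nat.nle_succ_0.
pose Qcons j M := forall w, (length w <= n)%coq_nat -> Q (j :: w) M.
have Hcons (j : 'I_m) : exists M, Qcons j M.
  by apply: IH => [w M M'|w Hw]; [exact: Qmono | apply: Qex => /=; lia].
have [Mj HMj] := fin_max Qcons
  (fun j M M' H MM' w Hw => Qmono _ _ _ (H w Hw) MM') Hcons.
have [M0 HM0] := Qex nil (Nat.le_0_l _).
exists (Rmax M0 Mj) => -[|j w] /= Hw.
- exact: Qmono HM0 (Rmax_l _ _).
- exact: Qmono (HMj j w (le_S_n _ _ Hw)) (Rmax_r _ _).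
Qed.

Lemma holder_mono {V m Om theta g i M M'} :
  holder_le V m Om theta g i M -> M <= M' -> holder_le V m Om theta g i M'.
Proof.
move=> Hg MM' s t Os Ot st; apply: Rle_trans (Hg s t Os Ot st) _.
exact/Rmult_le_compat_r/MM'/Rlt_le/Rpower_gt0.
Qed.

Lemma sn_sum_le {V : LCS} {X : Type} (P : X -> Prop) (g : X -> car V)
    (phi : X -> R) :
  (forall i, exists M, forall x, P x -> sn V i (g x) <= M * phi x) ->
  forall F, exists M, forall x, P x -> sn_sum F (g x) <= M * phi x.
Proof.
move=> Hg; elim=> [|i F [M HM]] /=; first by exists 0 => x _; lra.
have [Mi HMi] := Hg i; exists (Mi + M) => x Px.
by have := HM x Px; have := HMi x Px; lra.
Qed.

Section StrongToWeak.
Variables (V : LCS) (m : nat) (Om : Rm m -> Prop) (k : R) (f : Rm m -> car V).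

Lemma in_Ck_comp l : cont_linear V l ->
  in_Ck V m Om k f -> in_Ck RLCS m Om k (fun s => l (f s)).
Proof.
move=> Hl [D [HD [Dsup Dhol]]].
have [F [c [c_ge0 Hc]]] := cont_linear_bound Hl.
exists (fun w s => l (D w s)); split; first exact: deriv_family_comp.
split=> [[]|w Hw []].
- have [M HM] : exists M, forall s, Om s -> sn_sum F (f s) <= M * 1.
    apply: sn_sum_le => i; have [M HM] := Dsup i.
    by exists M => s; rewrite Rmult_1_r; apply: HM.
  exists (c * M) => s Os; rewrite RLCS_sn; apply: Rle_trans (Hc _) _.
  by apply: Rmult_le_compat_l => //; rewrite -[M]Rmult_1_r; apply: HM.
- have [M HM] : exists M, forall st : Rm m * Rm m,
      Om st.1 /\ Om st.2 /\ st.1 <> st.2 ->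
      sn_sum F (vsub V (D w st.1) (D w st.2))
        <= M * Rpower (distRm m st.1 st.2) (fpart k).
    apply: sn_sum_le => i; have [M HM] := Dhol w Hw i.
    by exists M => -[s t] [Os [Ot st]]; apply: HM.
  exists (c * M) => s t Os Ot st.
  rewrite RLCS_sn RLCS_vsub -(cont_linearB Hl) Rmult_assoc.
  apply: Rle_trans (Hc _) _; apply: Rmult_le_compat_l => //.
  exact: (HM (s, t)).
Qed.

Lemma in_Ck_seminorm_le : in_Ck V m Om k f ->
  forall p, exists C, 0 < C /\ Ck_seminorm_le V m Om k f p C.
Proof.
move=> [D [HD [Dsup Dhol]]] p.
have [Ms HMs] := Dsup p.
have [Mh HMh] := words_bound (fun w M => holder_le V m Om (fpart k) (D w) p M)
  (fun w M M' => holder_mono) (fun w Hw => Dhol w Hw p).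
exists (Rmax 1 (Rmax Ms Mh)); split.
  by apply: Rlt_le_trans (Rmax_l _ _); lra.
exists D; split => //; split => [s Os|w Hw].
- apply: Rle_trans (HMs s Os) _; apply: Rle_trans (Rmax_r _ _); exact: Rmax_l.
- apply: holder_mono (HMh w Hw) _; apply: Rle_trans (Rmax_r _ _); exact: Rmax_r.
Qed.

Lemma Ck_seminorm_le_comp {p C l B} : cont_linear V l -> dual_bound V p l B ->
  Ck_seminorm_le V m Om k f p C ->
  Ck_seminorm_le RLCS m Om k (fun s => l (f s)) tt (C * B).
Proof.
move=> Hl HB [D [HD [Dsup Dhol]]].
have [B_ge0 lB] := dual_bound_le Hl HB.
exists (fun w s => l (D w s)); split; first exact: deriv_family_comp.
split => [s Os|w Hw s t Os Ot st].
- rewrite RLCS_sn (Rmult_comm C); apply: Rle_trans (lB _) _.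
  exact: Rmult_le_compat_l (Dsup s Os).
- rewrite RLCS_sn RLCS_vsub -(cont_linearB Hl) (Rmult_comm C) Rmult_assoc.
  apply: Rle_trans (lB _) _; exact: Rmult_le_compat_l (Dhol w Hw s t Os Ot st).
Qed.

Lemma in_Ck_weak_Ck : in_Ck V m Om k f -> weak_Ck V m Om k f.
Proof.
move=> Hf p; have [C [C_gt0 HC]] := in_Ck_seminorm_le Hf p.
exists C; split => // l Hl; split; first exact: in_Ck_comp.
by move=> B HB; apply: Ck_seminorm_le_comp Hl HB HC.
Qed.

End StrongToWeak.

Section WeakToStrong.
Context {V : LCS} {m : nat} {Om : Rm m -> Prop} {k : R} {f : Rm m -> car V}.
Hypotheses (Oopen : is_open m Om) (Vcompl : seq_complete V).
Hypotheses (th_gt0 : 0 < fpart k) (Hweak : weak_Ck V m Om k f).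
Local Notation n := (ipart k).
Local Notation "x -v y" := (vsub V x y) (at level 50, left associativity).

(* Derivative families of [l o f] agree on the open set [Om], so quantifying
   over all of them is no stronger than asking it of one. *)
Definition weak_deriv (g : Rm m -> car V) (w : list 'I_m) : Prop :=
  forall l, cont_linear V l ->
  forall E, deriv_family RLCS m Om n (fun s => l (f s)) E ->
  forall s, Om s -> l (g s) = E w s.

Lemma weak_deriv_diff_quot {g w l E s j h} : weak_deriv g w -> cont_linear V l ->
  deriv_family RLCS m Om n (fun s => l (f s)) E ->
  Om s -> Om (shift m s j h) ->
  l (diff_quot V m g s j h) = diff_quot RLCS m (E w) s j h.
Proof.
move=> Hg Hl HE Os Oh; rewrite linear_diff_quot //.
by rewrite /diff_quot (Hg _ Hl _ HE _ Oh) (Hg _ Hl _ HE _ Os).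
Qed.

(* The scalar estimate of [diff_quot_holder] holds uniformly over the dual
   unit ball of each seminorm, hence for the seminorm itself by Hahn-Banach. *)
Lemma weak_diff_quot_holder {g w} j {s r} : (length w < n)%coq_nat ->
  weak_deriv g w -> (forall t, distRm m t s < r -> Om t) ->
  forall i, exists C, 0 < C /\ forall h h', h <> 0 -> h' <> 0 ->
    Rabs h < r -> Rabs h' < r ->
    sn V i (diff_quot V m g s j h -v diff_quot V m g s j h')
      <= C * Rpower (Rabs h + Rabs h') (fpart k).
Proof.
move=> Hw Hg ball i; have [C [C_gt0 HC]] := Hweak i.
exists C; split => // h h' h0 h0' hr hr'.
apply: sn_le_dual => l Hl Hb.
have [_ /(_ 1 Hb) [E [HE [_ Ehol]]]] := HC l Hl.
have O t : Rabs t < r -> Om (shift m s j t).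
  by move=> tr; apply: ball; rewrite dist_shift0.
have Os : Om s.
  by rewrite -(shift0 s j); apply: O; rewrite Rabs_R0; have := Rabs_pos h; lra.
rewrite (cont_linearB Hl) (weak_deriv_diff_quot Hg Hl HE Os (O _ hr)).
rewrite (weak_deriv_diff_quot Hg Hl HE Os (O _ hr')).
have C1_ge0 : 0 <= C * 1 by lra.
have := diff_quot_holder HE Hw ball (Rlt_le _ _ th_gt0) C1_ge0 (Ehol (j :: w) Hw)
  h0 h0' hr hr'.
by rewrite Rmult_1_r; apply: Rle_trans (Rle_abs _).
Qed.

Lemma weak_deriv_lim {g w} j {s} :
  (length w < n)%coq_nat -> weak_deriv g w -> Om s ->
  exists d, lim_at0 V (shift_dom m Om s j) (diff_quot V m g s j) d.
Proof.
move=> Hw Hg Os; have [r [r_gt0 ball]] := Oopen s Os.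
have [d Hd] := cauchy_at0_lim Vcompl
  (holder_cauchy_at0 th_gt0 r_gt0 (weak_diff_quot_holder j Hw Hg ball)).
by exists d; apply: lim_at0_sub Hd _ => h [].
Qed.

Fixpoint vderiv (w : list 'I_m) : Rm m -> car V :=
  match w with
  | nil => f
  | j :: w' => fun s => epsilon (inhabits (vzero V))
      (lim_at0 V (shift_dom m Om s j) (diff_quot V m (vderiv w') s j))
  end.

Lemma vderiv_lim {w} j {s} :
  (length w < n)%coq_nat -> weak_deriv (vderiv w) w -> Om s ->
  lim_at0 V (shift_dom m Om s j) (diff_quot V m (vderiv w) s j)
    (vderiv (j :: w) s).
Proof. by move=> Hw Hg Os; apply: epsilon_spec (weak_deriv_lim j Hw Hg Os). Qed.

Lemma weak_deriv_vderiv {w} : (length w <= n)%coq_nat -> weak_deriv (vderiv w) w.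
Proof.
elim: w => [|j w IH] Hw l Hl E HE s Os; first by rewrite (proj1 HE s Os).
have {IH} Hg := IH (Nat.lt_le_incl _ _ Hw).
apply: (lim_at0_R_unique (open_shift_near0 j Oopen Os)).
- apply: lim_at0_eq (cont_linear_lim Hl (vderiv_lim j Hw Hg Os)) _ => h [_ Oh].
  exact: weak_deriv_diff_quot Hg Hl HE Os Oh.
- by have /is_partialP := (proj2 HE) w j Hw; apply.
Qed.

Lemma weak_Ck_in_Ck : in_Ck V m Om k f.
Proof.
exists vderiv; split; [split => // w j Hw | split => [i | w Hw i]].
- apply/is_partialP => s Os; apply: vderiv_lim => //.
  exact/weak_deriv_vderiv/Nat.lt_le_incl.
- have [C [_ HC]] := Hweak i; exists C => s Os; apply: sn_le_dual => l Hl Hb.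
  have [_ /(_ 1 Hb) [E [_ [Esup _]]]] := HC l Hl.
  by have := Esup s Os; rewrite RLCS_sn Rmult_1_r; apply: Rle_trans (Rle_abs _).
- have [C [_ HC]] := Hweak i; exists C => s t Os Ot st.
  apply: sn_le_dual => l Hl Hb.
  have [_ /(_ 1 Hb) [E [HE [_ Ehol]]]] := HC l Hl.
  have := Ehol w Hw s t Os Ot st.
  rewrite RLCS_sn RLCS_vsub Rmult_1_r (cont_linearB Hl).
  rewrite !(weak_deriv_vderiv Hw _ Hl _ HE) //.
  exact: Rle_trans (Rle_abs _).
Qed.

End WeakToStrong.

Theorem lemma2p1 (V : LCS) (m : nat) (Om : Rm m -> Prop) (k : R)
    (f : Rm m -> car V) :
  hausdorff V -> seq_complete V -> is_open m Om ->
  0 < k -> (forall n : nat, k <> INR n) ->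
  (in_Ck V m Om k f <->
   forall p : Idx V, exists C : R, 0 < C /\
     forall l : car V -> R, cont_linear V l ->
       in_Ck RLCS m Om k (fun s => l (f s)) /\
       (forall B : R, dual_bound V p l B ->
          Ck_seminorm_le RLCS m Om k (fun s => l (f s)) tt (C * B))).
Proof.
move=> _ Vcompl Oopen k_gt0 kN; split; first exact: in_Ck_weak_Ck.
by move=> Hw; apply: (weak_Ck_in_Ck Oopen Vcompl (fpart_pos k_gt0 kN) Hw).
Qed.
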